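(* For every integer $n\ge 3$, the prism graph $GP(n,1)$ is odd prime.
   Context: All graphs are finite and simple. A graph $G$ of order $N$ is odd prime if there is a bijection $\ell:V(G)\to\{1,3,\ldots,2N-1\}$ with $\gcd(\ell(u),\ell(v))=1$ for every edge $uv$. The prism graph $GP(n,1)$ has vertices $u_1,\ldots,u_n,v_1,\ldots,v_n$ and edges $u_iu_{i+1}$, $v_iv_{i+1}$ for $1\le i\le n-1$, $u_nu_1$, $v_nv_1$, and $u_iv_i$ for $1\le i\le n$. *)

From mathcomp Require Import all_boot.
Set Implicit Arguments. Unset Strict Implicit. Unset Printing Implicit Defensive.

Definition simple_graph (T : finType) (adj : rel T) : Prop :=
  symmetric adj /\ irreflexive adj.

Definition odd_labels (N : nat) : seq nat := [seq 2 * i + 1 | i <- iota 0 N].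

(* G of order N = #|T| is odd prime: there is a bijection l : V -> {1,3,..,2N-1}
   (an injective map into that N-element set) with gcd(l u, l v) = 1 on every edge. *)
Definition odd_prime (T : finType) (adj : rel T) : Prop :=
  exists l : T -> nat,
    [/\ injective l,
        forall x, l x \in odd_labels #|T|
      & forall x y, adj x y -> coprime (l x) (l y)].

(* Prism graph GP(n,1): vertices (false, i) = u_(i+1), (true, i) = v_(i+1), i < n.
   Edges: same side with indices differing by 1 mod n (cycles), or same index on
   different sides (spokes). *)
Definition prism_adj (n : nat) : rel (bool * 'I_n) :=
  fun x y =>
    ((x.1 == y.1) &&
      (((x.2 : nat) == (y.2.+1 %% n)) || ((y.2 : nat) == (x.2.+1 %% n))) &&
      (x.2 != y.2))
    || ((x.1 != y.1) && (x.2 == y.2)).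
Arguments prism_adj n : clear implicits.

(* Label u_i by 4i+1 and v_i by 4i+3.  Spokes join labels differing by 2 and
   cycle edges labels differing by 4, so they are coprime odd pairs; the only
   edge that can fail is the wrap-around edge v_(n-1) v_0 with labels 4n-1 and 3,
   when 3 divides 4n-1.  In that case swapping the labels 1 and 3 of u_0 and v_0
   repairs it, since 4n-3 is then prime to 3 and the new cycle edges at index 0
   join 3, 5 and 1, 7. *)

From mathcomp Require Import all_boot zify.

Lemma odd_prime_from_index (T : finType) (adj : rel T) (f : T -> nat) :
  injective f -> (forall x, f x < #|T|) ->
  (forall x y, adj x y -> coprime (2 * f x + 1) (2 * f y + 1)) ->
  odd_prime adj.
Proof.
move=> f_inj f_lt f_cop; exists (fun x => 2 * f x + 1); split => //.
- by move=> x y /addIn /eqP; rewrite eqn_pmul2l // => /eqP /f_inj.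
- by move=> x; apply: (map_f (fun i => 2 * i + 1)); rewrite mem_iota add0n f_lt.
Qed.

Lemma coprime_odd_addn_pow2 a b e : odd a -> b = a + 2 ^ e -> coprime a b.
Proof. by move=> odd_a ->; rewrite /coprime gcdnDl -/(coprime _ _) coprimeXr ?coprimen2. Qed.

Lemma odd_double_addn1 k : odd (2 * k + 1).
Proof. by rewrite addn1 /= oddM. Qed.

Section PrismLabelling.

Variable n : nat.

Definition prism_swap (i : nat) : bool := (i == 0) && (3 %| 4 * n - 1).

Definition prism_index (b : bool) (i : nat) : nat := 2 * i + (b (+) prism_swap i).

Definition prism_label (b : bool) (i : nat) : nat := 2 * prism_index b i + 1.

Lemma prism_index_inj : injective (fun x : bool * 'I_n => prism_index x.1 x.2).
Proof.
move=> [b1 i] [b2 j]; rewrite /prism_index /= => E.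
have eq_ij : i = j by apply: val_inj; move: E; case: (_ (+) _); case: (_ (+) _) => /=; lia.
by subst j; move/addnI: E; case: b1; case: b2; case: (prism_swap i).
Qed.

Lemma prism_index_lt (x : bool * 'I_n) : prism_index x.1 x.2 < #|{: bool * 'I_n}|.
Proof.
rewrite card_prod card_bool card_ord /prism_index.
by have := ltn_ord x.2; case: (_ (+) _) => /=; lia.
Qed.

Lemma coprime_prism_label_spoke i : coprime (prism_label false i) (prism_label true i).
Proof.
rewrite /prism_label /prism_index; case: (prism_swap i) => /=.
- by rewrite coprime_sym; apply: (@coprime_odd_addn_pow2 _ _ 1); [exact: odd_double_addn1 | lia].
- by apply: (@coprime_odd_addn_pow2 _ _ 1); [exact: odd_double_addn1 | lia].
Qed.

Lemma coprime_prism_label_succ b i : coprime (prism_label b i) (prism_label b i.+1).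
Proof.
rewrite /prism_label /prism_index /prism_swap /= addbF.
have [-> | _] := eqVneq i 0; last first.
  by apply: (@coprime_odd_addn_pow2 _ _ 2); [exact: odd_double_addn1 | lia].
case: (3 %| _); case: b => /=; rewrite ?coprime1n //;
  by [apply: (@coprime_odd_addn_pow2 _ _ 1) | apply: (@coprime_odd_addn_pow2 _ _ 2)].
Qed.

Lemma coprime_prism_label_wrap b i :
  i.+1 = n -> 0 < i -> coprime (prism_label b i) (prism_label b 0).
Proof.
move=> def_n i_gt0; rewrite coprime_sym /prism_label /prism_index /prism_swap -def_n /=.
have [i_eq0 | _] := eqVneq i 0; first by rewrite i_eq0 in i_gt0.
rewrite /= addbF muln0 add0n.
by case: b; case: (boolP (3 %| _)) => div3 /=; rewrite ?coprime1n // prime_coprime //; move: div3; lia.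
Qed.

Lemma coprime_prism_label_cycle b (i j : 'I_n) :
  j = i.+1 %% n :> nat -> i != j -> coprime (prism_label b i) (prism_label b j).
Proof.
move=> def_j neq_ij; case: (ltnP i.+1 n) => [i1_lt_n | n_le_i1].
  by rewrite def_j modn_small //; apply: coprime_prism_label_succ.
have i1_eq_n : i.+1 = n by have := ltn_ord i; lia.
have j_eq0 : (j : nat) = 0 by rewrite def_j i1_eq_n modnn.
rewrite j_eq0; apply: coprime_prism_label_wrap => //.
by rewrite lt0n; apply: contra neq_ij => /eqP i_eq0; apply/eqP/val_inj; rewrite /= i_eq0 j_eq0.
Qed.

Lemma coprime_prism_label_adj (x y : bool * 'I_n) :
  prism_adj n x y -> coprime (prism_label x.1 x.2) (prism_label y.1 y.2).
Proof.
case: x y => [b1 i] [b2 j]; rewrite /prism_adj /= => /orP [].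
- case/andP => /andP [/eqP <- /orP [] /eqP def] neq_ij.
  + by rewrite coprime_sym; apply: coprime_prism_label_cycle; rewrite // eq_sym.
  + exact: coprime_prism_label_cycle.
- case/andP => neq_b /eqP <-; case: b1 b2 neq_b => [] [] // _.
  + by rewrite coprime_sym coprime_prism_label_spoke.
  + exact: coprime_prism_label_spoke.
Qed.

End PrismLabelling.

(* The labelling works for every n; for n <= 2 prism_adj is a degenerate prism. *)
Lemma prism_odd_prime n : odd_prime (prism_adj n).
Proof.
apply: (@odd_prime_from_index _ _ (fun x : bool * 'I_n => prism_index n x.1 x.2)).
- exact: prism_index_inj.
- exact: prism_index_lt.
- exact: coprime_prism_label_adj.
Qed.

Theorem theorem3p5 (n : nat) : 3 <= n -> odd_prime (prism_adj n).
Proof. by move=> _; apply: prism_odd_prime. Qed.
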